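(* Let $X$ be a real normed linear space which admits a predual ${}^*X$ (a normed space with $({}^*X)^* \simeq X$), and let $S \subset X$ be a closed subspace. Then the statement ''for every $y \in X$, the infimum $\inf_{x \in S} \|y - x\|$ is attained by some $x\in S$ and \[ \min_{x \in S} \|y - x\| \;=\; \sup_{\substack{\nu \in {}^\perp S \\ \|\nu\| \leq 1}} \langle \nu, y\rangle\text{''} \] holds if and only if $({}^\perp S)^\perp = S$.
   Context: A predual of a normed space $X$ is a normed space ${}^*X$ with $({}^*X)^* \simeq X$; via this isomorphism every $x \in X$ acts on ${}^*X$, with pairing written $\langle \nu, x\rangle$ for $\nu \in {}^*X$, $x \in X$. For $S \subset X$, the pre-annihilator is ${}^\perp S = \{\nu \in {}^*X : \langle \nu, x\rangle = 0 \ \forall x \in S\}$, and for $T \subset {}^*X$ its annihilator is $T^\perp = \{x \in X : \langle \nu, x\rangle = 0 \ \forall \nu \in T\}$ (identifying $({}^*X)^*$ with $X$). One always has $S \subset ({}^\perp S)^\perp$. *)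

From HB Require Import structures.
From mathcomp Require Import all_boot all_order all_algebra.
From mathcomp Require Import all_classical all_reals all_analysis.
Set Implicit Arguments. Unset Strict Implicit. Unset Printing Implicit Defensive.
Import Order.TTheory GRing.Theory Num.Theory.
Import numFieldNormedType.Exports.
Local Open Scope classical_set_scope.
Local Open Scope ring_scope.

(* A predual of the real normed space X is a real normed space P together with
   a pairing  <nu, x> = pair nu x  realizing an isometric linear isomorphism
   X ~ P^* (continuous dual of P), x |-> <., x>. *)
Definition is_predual_pairing (R : realType) (X P : normedModType R)
    (pair : P -> X -> R) : Prop :=
  (forall x a (u v : P), pair (a *: u + v) x = a * pair u x + pair v x) /\
  (forall x, continuous (pair^~ x)) /\
  (forall nu a (x y : X), pair nu (a *: x + y) = a * pair nu x + pair nu y) /\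
  (forall f : P -> R,
      (forall a (u v : P), f (a *: u + v) = a * f u + f v) ->
      continuous f -> exists x, forall nu, f nu = pair nu x) /\
  (forall x, `|x| = sup [set `|pair nu x| | nu in [set nu : P | `|nu| <= 1]]).

Definition is_subspace (R : realType) (X : normedModType R) (S : set X) : Prop :=
  S 0 /\ (forall a (x y : X), S x -> S y -> S (a *: x + y)).

Definition preannihilator (R : realType) (X P : normedModType R)
    (pair : P -> X -> R) (S : set X) : set P :=
  [set nu | forall x, S x -> pair nu x = 0].

Definition annihilator (R : realType) (X P : normedModType R)
    (pair : P -> X -> R) (T : set P) : set X :=
  [set x | forall nu, T nu -> pair nu x = 0].

From HB Require Import structures.
From mathcomp Require Import all_boot all_order all_algebra.
From mathcomp Require Import all_classical all_reals all_analysis.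
From mathcomp Require Import ring lra.
Import Order.TTheory GRing.Theory Num.Theory.
Import numFieldNormedType.Exports.
Local Open Scope classical_set_scope.
Local Open Scope ring_scope.
Set Implicit Arguments. Unset Strict Implicit. Unset Printing Implicit Defensive.

(* Weak duality: for nu in the unit ball of ^perp S and x in S,
   <nu, y> = <nu, y - x> <= ||y - x||.  Conversely, if (^perp S)^perp = S and c
   is the supremum, Hahn-Banach extends <., y> from ^perp S to a functional on
   the predual dominated by c ||.||; it is represented by some x1 with
   ||x1|| <= c, and <nu, y - x1> = 0 on ^perp S puts y - x1 in S, at distance
   at most c from y.  If the formula holds and y lies in (^perp S)^perp, the
   supremum is 0, so y is its own best approximation in S. *)

Section LinearFunctional.
Variables (R : pzRingType) (V : lmodType R) (h : V -> R).
Hypothesis h_lin : forall a u v, h (a *: u + v) = a * h u + h v.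

Lemma linfun0 : h 0 = 0.
Proof.
apply: (@addrI _ (h 0)); rewrite addr0.
by have := h_lin 1 0 0; rewrite scale1r addr0 mul1r.
Qed.

Lemma linfunD u v : h (u + v) = h u + h v.
Proof. by rewrite -[u]scale1r h_lin mul1r scale1r. Qed.

Lemma linfunZ a u : h (a *: u) = a * h u.
Proof. by rewrite -[a *: u]addr0 h_lin linfun0 addr0. Qed.

Lemma linfunN u : h (- u) = - h u.
Proof. by rewrite -scaleN1r linfunZ mulN1r. Qed.

Lemma linfunB u v : h (u - v) = h u - h v.
Proof. by rewrite linfunD linfunN. Qed.

End LinearFunctional.

Section HahnBanach.
Variables (R : realType) (V : lmodType R) (p : V -> R).
Hypothesis p_subadd : forall u v, p (u + v) <= p u + p v.
Hypothesis p_poshom : forall t u, 0 < t -> p (t *: u) = t * p u.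

(* Partial linear functionals below p, encoded by their graphs so that Zorn's
   lemma applies to the inclusion order. *)
Definition dominated_linear_graph (H : set (V * R)) :=
  [/\ (forall u a b, H (u, a) -> H (u, b) -> a = b),
      (forall t u a v b, H (u, a) -> H (v, b) -> H (t *: u + v, t * a + b)) &
      (forall u a, H (u, a) -> a <= p u)].

Definition graph_extension (H : set (V * R)) (w : V) (al : R) : set (V * R) :=
  [set z | exists t u a, H (u, a) /\ z.1 = t *: w + u /\ z.2 = t * al + a].

Section OneStepExtension.
Variables (H : set (V * R)) (w : V).
Hypothesis H_graph : dominated_linear_graph H.
Hypothesis H00 : H (0, 0).
Hypothesis w_undef : ~ exists a, H (w, a).

Lemma graph_scale s u a : H (u, a) -> H (s *: u, s * a).
Proof. by case: H_graph => _ Hlin _ /(Hlin s _ _ _ _)/(_ H00); rewrite !addr0. Qed.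

Lemma graph_extension_fun al u a b :
  graph_extension H w al (u, a) -> graph_extension H w al (u, b) -> a = b.
Proof.
case: H_graph => Hfun Hlin _.
move=> [t [u1 [a1 [H1 [/= -> ->]]]]] [t' [u2 [a2 [H2 [/= e ->]]]]].
have [tt'|tt'] := eqVneq t t'.
  subst t'; have eu : u1 = u2 := addrI _ e.
  by subst u2; rewrite (Hfun _ _ _ H1 H2).
have e2 : (t - t') *: w = u2 - u1.
  have -> : u2 = t *: w + u1 - t' *: w by rewrite e addrAC subrr add0r.
  by rewrite scalerBl addrAC addrK.
have H21 : H (u2 - u1, a2 - a1).
  by have := Hlin (-1) _ _ _ _ H1 H2; rewrite scaleN1r mulN1r !(addrC (- _)).
case: w_undef; exists ((t - t')^-1 * (a2 - a1)).
have tt0 : t - t' != 0 by rewrite subr_eq0.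
by rewrite -[w]scale1r -(mulVf tt0) -scalerA e2; exact: graph_scale H21.
Qed.

Lemma graph_extension_lin al t u a v b :
  graph_extension H w al (u, a) -> graph_extension H w al (v, b) ->
  graph_extension H w al (t *: u + v, t * a + b).
Proof.
case: H_graph => _ Hlin _.
move=> [s [u1 [a1 [H1 [/= -> ->]]]]] [s' [u2 [a2 [H2 [/= -> ->]]]]].
exists (t * s + s'), (t *: u1 + u2), (t * a1 + a2); split; first exact: Hlin.
split => /=; last by ring.
by rewrite scalerDr scalerA addrACA scalerDl.
Qed.

(* Candidates for the value at w: the extension is dominated iff
   a - p (u - w) <= al <= p (v + w) - b for all (u, a), (v, b) in H. *)
Let lower := [set z.2 - p (z.1 - w) | z in H].
Let al := sup lower.

Lemma lower_le_upper u a v b : H (u, a) -> H (v, b) -> a - p (u - w) <= p (v + w) - b.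
Proof.
case: H_graph => _ Hlin Hdom Hua Hvb.
have := Hdom _ _ (Hlin 1 _ _ _ _ Hua Hvb); rewrite scale1r mul1r => hsum.
have := p_subadd (u - w) (v + w); rewrite addrACA addNr addr0; lra.
Qed.

Lemma has_sup_lower : has_sup lower.
Proof.
split; first by exists (0 - p (0 - w)), (0, 0).
exists (p (0 + w) - 0) => _ [[u a] Hua <-]; exact: lower_le_upper Hua H00.
Qed.

Lemma le_lower_sup u a : H (u, a) -> a - p (u - w) <= al.
Proof. by move=> Hua; apply: (sup_upper_bound has_sup_lower); exists (u, a). Qed.

Lemma sup_lower_le v b : H (v, b) -> al <= p (v + w) - b.
Proof.
move=> Hvb; apply: ge_sup; first by case: has_sup_lower.
by move=> _ [[u a] Hua <-]; exact: lower_le_upper Hua Hvb.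
Qed.

Lemma graph_extension_dominated u a : graph_extension H w al (u, a) -> a <= p u.
Proof.
case: H_graph => _ _ Hdom.
move=> [t [u1 [a1 [H1 [/= -> ->]]]]]; rewrite [t *: w + u1]addrC.
have [t0|t0|->] := ltgtP t 0; last by rewrite scale0r mul0r !addr0 add0r; exact: Hdom.
- have s0 : 0 < - t by rewrite oppr_gt0.
  have := le_lower_sup (graph_scale (- t)^-1 H1).
  rewrite -(ler_pM2l s0) mulrBr -p_poshom // mulVKf ?gt_eqF //.
  by rewrite scalerBr scalerA mulfV ?gt_eqF // scale1r scaleNr opprK; lra.
- have := sup_lower_le (graph_scale t^-1 H1).
  rewrite -(ler_pM2l t0) mulrBr -p_poshom // mulVKf ?gt_eqF //.
  by rewrite scalerDr scalerA mulfV ?gt_eqF // scale1r; lra.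
Qed.

Lemma dominated_graph_extension :
  exists al, dominated_linear_graph (graph_extension H w al).
Proof.
exists al; split; [exact: graph_extension_fun | exact: graph_extension_lin |].
exact: graph_extension_dominated.
Qed.

End OneStepExtension.

Lemma dominated_graph_chain (G0 : set (V * R)) (F : set (set (V * R))) :
  dominated_linear_graph G0 -> (forall X, F X -> dominated_linear_graph (X `|` G0)) ->
  total_on F subset -> dominated_linear_graph ((\bigcup_(X in F) X) `|` G0).
Proof.
move=> G0_graph F_graph F_total; set U := _ `|` G0.
have subU X : F X -> X `|` G0 `<=` U by move=> FX z [Xz|Gz]; [left; exists X | right].
have common z1 z2 : U z1 -> U z2 ->
    exists2 Y, dominated_linear_graph Y & Y `<=` U /\ Y z1 /\ Y z2.
  case=> [[X FX Xz1]|G1]; case=> [[X' FX' Xz2]|G2].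
  - have [XX'|X'X] := F_total _ _ FX FX'.
    + by exists (X' `|` G0); [exact: F_graph | split; [exact: subU | split; left=> //; exact: XX']].
    + by exists (X `|` G0); [exact: F_graph | split; [exact: subU | split; left=> //; exact: X'X]].
  - by exists (X `|` G0); [exact: F_graph | split; [exact: subU | split; [left | right]]].
  - by exists (X' `|` G0); [exact: F_graph | split; [exact: subU | split; [right | left]]].
  - by exists G0 => //; split=> // z Gz; right.
split.
- by move=> u a b /common/[apply] -[Y [Yfun _ _] [_ [Ya Yb]]]; exact: Yfun Ya Yb.
- move=> t u a v b /common/[apply] -[Y [_ Ylin _] [YU [Ya Yb]]].
  by apply: YU; exact: Ylin.
- by move=> u a Ha; have [Y [_ _ Ydom] [_ [Ya _]]] := common _ _ Ha Ha; exact: Ydom Ya.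
Qed.

Theorem hahn_banach (M : set V) (f : V -> R) :
  M 0 -> (forall a u v, M u -> M v -> M (a *: u + v)) ->
  (forall a u v, M u -> M v -> f (a *: u + v) = a * f u + f v) ->
  (forall u, M u -> f u <= p u) ->
  exists g : V -> R, [/\ forall a u v, g (a *: u + v) = a * g u + g v,
     forall u, M u -> g u = f u & forall u, g u <= p u].
Proof.
move=> M0 Mlin f_lin f_dom.
pose G0 := [set z : V * R | M z.1 /\ z.2 = f z.1].
have G0_graph : dominated_linear_graph G0.
  split=> [u a b [_ /= ->] [_ /= ->] // | t u a v b [Mu /= ->] [Mv /= ->] | u a [Mu /= ->]].
    by split=> /=; [exact: Mlin | rewrite f_lin].
  exact: f_dom.
(* Zorn runs on graphs modulo [G0]: the empty chain has union [set0]. *)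
have [A [A_graph A_max]] := @Zorn_bigcup (V * R)
  [set A | dominated_linear_graph (A `|` G0)] (fun F FQ => dominated_graph_chain G0_graph FQ).
set H := A `|` G0 in A_graph.
have H00 : H (0, 0).
  right; split=> //=; apply/esym/(@addrI _ (f 0)); rewrite addr0.
  by have := f_lin 1 0 0 M0 M0; rewrite scale1r addr0 mul1r.
have H_total w : exists a, H (w, a).
  apply: contrapT => w_undef.
  have [al ext_graph] := dominated_graph_extension A_graph H00 w_undef.
  have H_ext : H `<=` graph_extension H w al.
    by move=> [u a] Hua; exists 0, u, a; rewrite scale0r mul0r !add0r.
  apply: (A_max (graph_extension H w al)); last first.
    by rewrite /= setUidl // => z G0z; apply: H_ext; right.
  split=> [z Az | A_ext]; first by apply: H_ext; left.
  apply: w_undef; exists al; left; apply: A_ext.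
  by exists 1, 0, 0; rewrite scale1r mul1r !addr0.
have [g gH] := choice H_total; case: A_graph => Hfun Hlin Hdom.
exists g; split=> [a u v | u Mu | u].
- exact: Hfun (gH _) (Hlin a _ _ _ _ (gH u) (gH v)).
- by apply: Hfun (gH u) _; right.
- exact: Hdom (gH u).
Qed.

End HahnBanach.

Lemma bounded_linfun_continuous (R : realType) (V : normedModType R) (g : V -> R) (c : R) :
  0 <= c -> (forall a u v, g (a *: u + v) = a * g u + g v) ->
  (forall u, `|g u| <= c * `|u|) -> continuous g.
Proof.
move=> c0 g_lin g_bd x; apply/cvgrPdist_lt => e e0.
have ec : 0 < e / (c + 1) by rewrite divr_gt0 // ltr_wpDl.
near=> y; rewrite -linfunB //; apply: le_lt_trans (g_bd _) _.
have : `|x - y| < e / (c + 1) by near: y; exact: cvgr_dist_lt.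
rewrite ltr_pdivlMr ?ltr_wpDl //; have := normr_ge0 (x - y); nra.
Unshelve. all: by end_near.
Qed.

Section PredualPairing.
Variables (R : realType) (X P : normedModType R) (pair : P -> X -> R).
Hypothesis pair_linl : forall x a (u v : P), pair (a *: u + v) x = a * pair u x + pair v x.
Hypothesis pair_linr : forall nu a (x y : X), pair nu (a *: x + y) = a * pair nu x + pair nu y.
Hypothesis pair_onto : forall f : P -> R,
  (forall a (u v : P), f (a *: u + v) = a * f u + f v) ->
  continuous f -> exists x, forall nu, f nu = pair nu x.
Hypothesis norm_pair_sup :
  forall x, `|x| = sup [set `|pair nu x| | nu in [set nu : P | `|nu| <= 1]].

Lemma pair0l x : pair 0 x = 0.
Proof. exact: linfun0 (pair_linl x). Qed.

Lemma pair_le_norm nu x : `|nu| <= 1 -> `|pair nu x| <= `|x|.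
Proof.
move=> nu1; have [->|x0] := eqVneq x 0; first by rewrite linfun0 // !normr0.
rewrite norm_pair_sup; apply: sup_upper_bound; last by exists nu.
split; first by exists `|pair nu x|, nu.
apply: contrapT => unbounded; move: (norm_pair_sup x).
by rewrite sup_out => [/eqP|[]//]; rewrite normr_eq0 (negbTE x0).
Qed.

Variable S : set X.

Let M := preannihilator pair S.
Let dual_ball := [set nu : P | M nu /\ `|nu| <= 1].

Lemma preannihilator0 : M 0.
Proof. by move=> x _; exact: pair0l. Qed.

Lemma preannihilator_lin a u v : M u -> M v -> M (a *: u + v).
Proof. by move=> Mu Mv x Sx; rewrite pair_linl Mu // Mv // mulr0 addr0. Qed.

Lemma dual_ball0 : dual_ball 0.
Proof. by split; [exact: preannihilator0 | rewrite normr0]. Qed.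

Section DualDistance.
Variable y : X.

Let dual_dist := sup [set pair nu y | nu in dual_ball].

Lemma has_sup_dual_dist : has_sup [set pair nu y | nu in dual_ball].
Proof.
split; first by exists (pair 0 y), 0; [exact: dual_ball0 |].
exists `|y| => _ [nu [_ nu1] <-]; exact: le_trans (ler_norm _) (pair_le_norm y nu1).
Qed.

Lemma dual_dist_ge0 : 0 <= dual_dist.
Proof. by rewrite -(pair0l y); apply: (sup_upper_bound has_sup_dual_dist); exists 0; first exact: dual_ball0. Qed.

Lemma dual_dist_le_dist x : S x -> dual_dist <= `|y - x|.
Proof.
move=> Sx; apply: ge_sup; first by case: has_sup_dual_dist.
move=> _ [nu [Mnu nu1] <-]; rewrite -[pair nu y]subr0 -(Mnu x Sx) -linfunB //.
exact: le_trans (ler_norm _) (pair_le_norm _ nu1).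
Qed.

Lemma pair_le_dual_dist nu : M nu -> pair nu y <= dual_dist * `|nu|.
Proof.
move=> Mnu; have [->|nu0] := eqVneq nu 0; first by rewrite pair0l normr0 mulr0.
have nu_gt0 : 0 < `|nu| by rewrite normr_gt0.
suff : pair (`|nu|^-1 *: nu) y <= dual_dist.
  by rewrite (linfunZ (pair_linl y)) -(ler_pM2l nu_gt0) mulrA mulfV ?gt_eqF // mul1r mulrC.
apply: (sup_upper_bound has_sup_dual_dist); exists (`|nu|^-1 *: nu) => //; split.
  by rewrite -[_ *: nu]addr0; apply: preannihilator_lin => //; exact: preannihilator0.
by rewrite normrZ ger0_norm ?invr_ge0 // mulVf ?gt_eqF.
Qed.

Lemma dual_dist_representative :
  exists2 x1 : X, (forall nu, M nu -> pair nu x1 = pair nu y) & `|x1| <= dual_dist.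
Proof.
have subadd (u v : P) : dual_dist * `|u + v| <= dual_dist * `|u| + dual_dist * `|v|.
  by rewrite -mulrDr ler_wpM2l ?dual_dist_ge0 // ler_normD.
have poshom t (u : P) : 0 < t -> dual_dist * `|t *: u| = t * (dual_dist * `|u|).
  by move=> t0; rewrite normrZ gtr0_norm // mulrCA.
have [g [g_lin gM g_dom]] := hahn_banach subadd poshom preannihilator0
  preannihilator_lin (fun a u v _ _ => pair_linl y a u v) pair_le_dual_dist.
have g_bd u : `|g u| <= dual_dist * `|u|.
  rewrite ler_norml g_dom andbT lerNl -linfunN //.
  by apply: le_trans (g_dom _) _; rewrite normrN.
have [x1 g_x1] := pair_onto g_lin (bounded_linfun_continuous dual_dist_ge0 g_lin g_bd).
exists x1 => [nu Mnu | ]; first by rewrite -g_x1 gM.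
rewrite norm_pair_sup; apply: ge_sup; first by exists `|pair 0 x1|, 0; rewrite //= normr0.
move=> _ [nu nu1 <-]; rewrite -g_x1; apply: le_trans (g_bd _) _.
by rewrite ler_piMr ?dual_dist_ge0.
Qed.

Lemma best_approximation_dual : annihilator pair M = S ->
  exists2 x0 : X, S x0 &
    (forall x, S x -> `|y - x0| <= `|y - x|) /\ `|y - x0| = dual_dist.
Proof.
move=> annM; have [x1 x1_y x1_le] := dual_dist_representative.
have Sx0 : S (y - x1) by rewrite -annM => nu Mnu; rewrite (linfunB (pair_linr nu)) x1_y // subrr.
have y_x0 : y - (y - x1) = x1 by rewrite opprB addrC subrK.
have x1_eq : `|x1| = dual_dist.
  by apply: le_anti; rewrite x1_le -{1}y_x0 dual_dist_le_dist.
by exists (y - x1) => //; rewrite y_x0 x1_eq; split=> // x Sx; exact: dual_dist_le_dist.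
Qed.

Lemma dual_dist_annihilator : annihilator pair M y -> dual_dist = 0.
Proof.
move=> ann_y; suff ball_y : [set pair nu y | nu in dual_ball] = [set 0].
  by rewrite /dual_dist ball_y sup1.
apply/seteqP; split=> [_ [nu [Mnu _] <-] | _ ->]; first exact: ann_y.
by exists 0; [exact: dual_ball0 | exact: pair0l].
Qed.

End DualDistance.

Lemma annihilator_preannihilator_sub : S `<=` annihilator pair M.
Proof. by move=> x Sx nu Mnu; exact: Mnu. Qed.

End PredualPairing.

Theorem theorem4 (R : realType) (X P : normedModType R) (pair : P -> X -> R)
  (hpre : is_predual_pairing pair) (S : set X)
  (hS : is_subspace S) (hcl : closed S) :
  (forall y : X, exists2 x0 : X, S x0 &
     (forall x, S x -> `|y - x0| <= `|y - x|) /\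
     `|y - x0| = sup [set pair nu y | nu in
                      [set nu : P | preannihilator pair S nu /\ `|nu| <= 1]])
  <-> annihilator pair (preannihilator pair S) = S.
Proof.
have [pair_linl [_ [pair_linr [pair_onto norm_pair_sup]]]] := hpre.
split=> [best | annS y]; last exact: best_approximation_dual.
apply/seteqP; split=> [y ann_y | ]; last exact: annihilator_preannihilator_sub.
have [x0 Sx0 [_]] := best y.
by rewrite dual_dist_annihilator // => /eqP; rewrite normr_eq0 subr_eq0 => /eqP ->.
Qed.
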